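(* Let $(\Omega,\mathcal{F},\mathbb{P})$ be a nonatomic probability space, let $\delta:[0,1]\to[0,1]$ be concave and increasing with $\delta(0)=0$, $\delta(1)=1$, and let $\mathcal{A}_\delta=\{X\in L^\infty:\rho_\delta(X)\le0\}$. Let $S=(S_0,S_T)$ be a traded asset with $S_T\in L^\infty$. Then $\rho_{\mathcal{A}_\delta,S}$ is finite-valued (hence continuous) on $L^\infty$ if and only if $\delta(F_{S_T}(x))<1$ for some $x>0$. In particular, if $\delta$ is strictly increasing on some left neighborhood of $1$, then $\rho_{\mathcal{A}_\delta,S}$ is finite-valued on $L^\infty$.
   Context: $F_X$ is the distribution function of $X$. The distortion risk measure is $\rho_\delta(X)=\int_{-\infty}^0\delta(F_X(x))\,dx-\int_0^\infty(1-\delta(F_X(x)))\,dx$ for $X\in L^\infty$. A traded asset is $S=(S_0,S_T)$ with $S_0>0$, $S_T\ge0$ a.s., $S_T\ne0$. For $\mathcal{B}\subset L^\infty$, $\rho_{\mathcal{B},S}(X)=\inf\{m\in\mathbb{R}:X+\frac{m}{S_0}S_T\in\mathcal{B}\}$. *)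

From HB Require Import structures.
From mathcomp Require Import all_boot all_order all_algebra.
From mathcomp Require Import all_classical all_reals all_analysis.
Set Implicit Arguments. Unset Strict Implicit. Unset Printing Implicit Defensive.
Import Order.TTheory GRing.Theory Num.Theory.
Import numFieldNormedType.Exports.
Local Open Scope classical_set_scope.
Local Open Scope ring_scope.

Section Defs.
Context {d : measure_display} {T : measurableType d} {R : realType}.
Variable P : probability T R.

Definition nonatomic : Prop :=
  forall A : set T, measurable A -> (0 < P A)%E ->
    exists B : set T, [/\ measurable B, B `<=` A, (0 < P B)%E & (P B < P A)%E].

(* L^infty (as functions; everything below is invariant under a.s. equality) *)
Definition Linf (X : T -> R) : Prop :=
  measurable_fun setT X /\ exists M : R, {ae P, forall w, `|X w| <= M}.

Definition distr_fun (X : T -> R) (x : R) : R := fine (P [set w | X w <= x]).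

Definition rho_distortion (delta : R -> R) (X : T -> R) : \bar R :=
  ((\int[lebesgue_measure]_(x in `]-oo, 0%R]) (delta (distr_fun X x))%:E)
   - (\int[lebesgue_measure]_(x in `]0%R, +oo[) (1 - delta (distr_fun X x))%:E))%E.

Definition acc_distortion (delta : R -> R) : set (T -> R) :=
  [set X | Linf X /\ (rho_distortion delta X <= 0)%E].

Definition traded_asset (S0 : R) (ST : T -> R) : Prop :=
  [/\ 0 < S0, measurable_fun setT ST, {ae P, forall w, 0 <= ST w}
    & ~ {ae P, forall w, ST w = 0}].

Definition rho_BS (B : set (T -> R)) (S0 : R) (ST : T -> R) (X : T -> R) : \bar R :=
  ereal_inf [set m%:E | m in [set m : R | B (fun w => X w + m / S0 * ST w)]].

End Defs.

Definition distortion_fun {R : realType} (delta : R -> R) : Prop :=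
  [/\ (forall x y, 0 <= x -> x <= y -> y <= 1 -> delta x <= delta y),
      (forall x y t, 0 <= x <= 1 -> 0 <= y <= 1 -> 0 <= t <= 1 ->
          t * delta x + (1 - t) * delta y <= delta (t * x + (1 - t) * y)),
      delta 0 = 0 & delta 1 = 1].

From HB Require Import structures.
From mathcomp Require Import all_boot all_order all_algebra.
From mathcomp Require Import all_classical all_reals all_analysis.
From mathcomp Require Import measurable_realfun lra.
Set Implicit Arguments.
Unset Strict Implicit.
Unset Printing Implicit Defensive.
Import Order.TTheory GRing.Theory Num.Theory.
Import numFieldNormedType.Exports.
Local Open Scope classical_set_scope.
Local Open Scope ring_scope.

(* If [delta (F_ST x0) < 1] for some [x0 > 0], fix a bounded [X] with bound [M].
   A long position [c ST] with [c] large makes [F_(X + c ST)] vanish below [-M]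
   and keeps [delta o F_(X + c ST) <= delta (F_ST x0) < 1] on a long stretch of
   [(0, +oo)], so [rho_delta (X + c ST) <= 0]: the infimum is [< +oo].
   A short position [c ST] with [-c] large makes [delta o F_(X + c ST) = 1]
   above [M] while [delta o F >= F >= P[ST >= e] > 0] (concavity) on a long
   stretch of [(-oo, 0]], so [rho_delta > 0]: the infimum is [> -oo].
   Conversely, if [delta o F_ST = 1] on [(0, +oo)] then [delta o F_(-1 + c ST)]
   equals [1] on [(-1, +oo)] for every [c], so no position makes [-1]
   acceptable and [rho(-1) = +oo]. *)

Section Probability.
Context {d : measure_display} {T : measurableType d} {R : realType}.
Variable P : probability T R.

Definition pr (A : set T) : R := fine (P A).

Lemma pr_ge0 A : 0 <= pr A.
Proof. exact/fine_ge0/measure_ge0. Qed.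

Lemma le_pr A B : measurable A -> measurable B -> P.-negligible (A `\` B) ->
  pr A <= pr B.
Proof.
move=> mA mB [N [mN N0 ABN]]; rewrite /pr fine_le ?fin_num_measure//.
apply: (@le_trans _ _ (P (B `|` N))).
  apply: le_measure; rewrite ?inE//; first exact: measurableU.
  by move=> w Aw; have [Bw|nBw] := pselect (B w); [left|right; apply: ABN].
apply: (le_trans (measureU2 _ _ _)) => //.
by move: N0 => /= ->; rewrite adde0.
Qed.

Lemma pr_le1 A : measurable A -> pr A <= 1.
Proof.
by move=> mA; rewrite -[1]/(fine 1%E) fine_le ?fin_num_measure ?probability_le1.
Qed.

Lemma pr_setC A : measurable A -> pr (~` A) = 1 - pr A.
Proof.
move=> mA; rewrite /pr probability_setC//.
by rewrite -(fineK (fin_num_measure P _ mA)).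
Qed.

Lemma pr_eq0 A : measurable A -> P.-negligible A -> pr A = 0.
Proof.
move=> mA nA; apply/eqP; rewrite eq_le pr_ge0 andbT.
by rewrite -[0]/(fine 0%E) -(measure0 P); apply: le_pr; rewrite ?setD0.
Qed.

Lemma pr_eq1 A : measurable A -> P.-negligible (~` A) -> pr A = 1.
Proof.
move=> mA nA; have := pr_eq0 (measurableC mA) nA.
by rewrite pr_setC// => /eqP; rewrite subr_eq0 eq_sym => /eqP.
Qed.

End Probability.

Section LebesgueBounds.
Context {R : realType}.
Notation lebesgue := (@lebesgue_measure R).

Lemma lebesgue_itv_length (a b : R) (l r : bool) : a < b ->
  lebesgue [set` Interval (BSide l a) (BSide r b)] = (b - a)%:E.
Proof. by move=> ab; rewrite lebesgue_measure_itv/= lte_fin ab. Qed.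

Lemma integral_le_measure (D C : set R) (f : R -> R) :
  measurable D -> measurable C -> measurable_fun D f ->
  (forall x, D x -> 0 <= f x <= 1) -> (forall x, D x -> ~ C x -> f x = 0) ->
  (\int[lebesgue]_(x in D) (f x)%:E <= lebesgue C)%E.
Proof.
move=> mD mC mf f01 f0.
apply: (@le_trans _ _ (\int[lebesgue]_(x in D) (\1_C x)%:E)%E).
  apply: ge0_le_integral => //.
  - by move=> x Dx; rewrite lee_fin; case/andP: (f01 x Dx).
  - exact/measurable_EFinP.
  - exact/measurable_EFinP/measurable_indic.
  - move=> x Dx; rewrite lee_fin indicE.
    have [Cx|nCx] := boolP (x \in C); first by case/andP: (f01 x Dx).
    by rewrite f0// => Cx; rewrite mem_set in nCx.
by rewrite integral_indic// le_measure ?inE//; exact: measurableI.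
Qed.

Lemma integral_ge_measure (D C : set R) (f : R -> R) (k : R) :
  measurable D -> measurable C -> C `<=` D -> measurable_fun D f ->
  (forall x, D x -> 0 <= f x) -> 0 <= k -> (forall x, C x -> k <= f x) ->
  (k%:E * lebesgue C <= \int[lebesgue]_(x in D) (f x)%:E)%E.
Proof.
move=> mD mC CD mf f0 k0 fk.
apply: (@le_trans _ _ (\int[lebesgue]_(x in C) (f x)%:E)%E); last first.
  by apply: ge0_subset_integral => //; exact/measurable_EFinP.
rewrite -integral_cst//; apply: ge0_le_integral => //.
by apply/measurable_EFinP; exact: (measurable_funS mD CD mf).
Qed.

End LebesgueBounds.

Section Distortion.
Context {R : realType}.
Variable delta : R -> R.
Hypothesis delta_distortion : distortion_fun delta.

Lemma distortion_le x y : 0 <= x -> x <= y -> y <= 1 -> delta x <= delta y.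
Proof. by case: delta_distortion => mono _ _ _; exact: mono. Qed.

Lemma distortion_ge0 x : 0 <= x <= 1 -> 0 <= delta x.
Proof.
case/andP=> x0 x1; case: delta_distortion => _ _ <- _.
exact: distortion_le.
Qed.

Lemma distortion_le1 x : 0 <= x <= 1 -> delta x <= 1.
Proof.
case/andP=> x0 x1; case: delta_distortion => _ _ _ d1.
by rewrite -[X in _ <= X]d1; exact: distortion_le.
Qed.

Lemma distortion_ge_id x : 0 <= x <= 1 -> x <= delta x.
Proof.
move=> x01; case: delta_distortion => _ concave d0 d1.
have := concave 1 0 x; rewrite d0 d1 !mulr1 !mulr0 !addr0.
by apply; rewrite ?ler01 ?lexx.
Qed.

Lemma distortion_lt1 a y : a < 1 ->
  (forall x z, a <= x -> x < z -> z <= 1 -> delta x < delta z) ->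
  0 <= y < 1 -> delta y < 1.
Proof.
move=> a1 strict /andP[y0 y1]; case: delta_distortion => _ _ _ d1.
rewrite -d1; have [ay|ya] := leP a y; first exact: strict.
apply: le_lt_trans (strict _ _ (lexx a) a1 (lexx 1)).
exact: distortion_le (ltW ya) (ltW a1).
Qed.

End Distortion.

Section DistributionFunction.
Context {d : measure_display} {T : measurableType d} {R : realType}.
Variable P : probability T R.
Implicit Types (Y : T -> R) (x : R).

Lemma measurable_sublevel Y x : measurable_fun setT Y ->
  measurable [set w | Y w <= x].
Proof.
move=> mY; have := mY measurableT _ (measurable_itv `]-oo, x]).
by rewrite setTI; congr measurable; apply/funext => w /=; rewrite in_itv.
Qed.

Lemma measurable_superlevel Y x : measurable_fun setT Y ->
  measurable [set w | x <= Y w].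
Proof.
move=> mY; have := mY measurableT _ (measurable_itv `[x, +oo[).
rewrite setTI; congr measurable.
by apply/funext => w /=; rewrite in_itv/= andbT.
Qed.

Lemma distr_fun_ge0 Y x : 0 <= distr_fun P Y x.
Proof. exact: pr_ge0. Qed.

Lemma distr_fun_le1 Y x : measurable_fun setT Y -> distr_fun P Y x <= 1.
Proof. by move=> mY; apply: pr_le1; exact: measurable_sublevel. Qed.

Lemma distr_fun_nondecreasing Y : measurable_fun setT Y ->
  {homo distr_fun P Y : x y / x <= y}.
Proof.
move=> mY x y xy; apply: le_pr; [exact: measurable_sublevel..|].
rewrite (_ : _ `\` _ = set0); first exact: negligible_set0.
by apply/seteqP; split => w //= [Yx]; apply; exact: le_trans xy.
Qed.

Variable delta : R -> R.
Hypothesis delta_distortion : distortion_fun delta.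

Lemma distortion_distr_fun_01 Y x : measurable_fun setT Y ->
  0 <= delta (distr_fun P Y x) <= 1.
Proof.
move=> mY; have F01 : 0 <= distr_fun P Y x <= 1.
  by rewrite distr_fun_ge0 distr_fun_le1.
by rewrite (distortion_ge0 delta_distortion F01)
  (distortion_le1 delta_distortion F01).
Qed.

Lemma measurable_distortion_distr_fun Y (D : set R) :
  measurable_fun setT Y -> measurable D ->
  measurable_fun D (fun x => delta (distr_fun P Y x)).
Proof.
move=> mY mD; apply: nondecreasing_measurable => // x y xy.
apply: (distortion_le delta_distortion).
- exact: distr_fun_ge0.
- exact: distr_fun_nondecreasing.
- exact: distr_fun_le1.
Qed.

End DistributionFunction.

Section DistortionRiskSign.
Context {d : measure_display} {T : measurableType d} {R : realType}.
Variable P : probability T R.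
Variable delta : R -> R.
Hypothesis delta_distortion : distortion_fun delta.
Variable Y : T -> R.
Hypothesis mY : measurable_fun setT Y.
Let g x := delta (distr_fun P Y x).
Let g01 x : 0 <= g x <= 1.
Proof. exact: distortion_distr_fun_01. Qed.

Let mg (D : set R) : measurable D -> measurable_fun D g.
Proof. exact: measurable_distortion_distr_fun. Qed.

Lemma rho_distortion_le0 (M L eta : R) :
  0 < M -> 0 < L -> 0 <= eta -> M <= eta * L ->
  (forall x, x < - M -> g x = 0) -> (forall x, 0 < x <= L -> g x <= 1 - eta) ->
  (rho_distortion P delta Y <= 0)%E.
Proof.
move=> M0 L0 eta0 ML g0 g_small; rewrite /g in g0 g_small.
rewrite /rho_distortion sube_le0.
apply: (@le_trans _ _ M%:E); last apply: (@le_trans _ _ (eta * L)%:E).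
- have -> : M%:E = (0 - - M)%:E by rewrite sub0r opprK.
  rewrite -(@lebesgue_itv_length _ (- M) 0 true false) ?oppr_lt0//.
  apply: integral_le_measure => //.
  + exact: mg.
  + by move=> x _; exact: g01.
  + move=> x; rewrite /= !in_itv/= => x0 xM; apply: g0.
    by rewrite ltNge; apply/negP => Mx; apply: xM; rewrite Mx x0.
- by rewrite lee_fin.
- have -> : (eta * L)%:E = (eta%:E * (L - 0)%:E)%E by rewrite subr0.
  rewrite -(lebesgue_itv_length false false L0).
  apply: integral_ge_measure => //.
  + by move=> x; rewrite /= !in_itv/= andbT => /andP[->].
  + by apply: measurable_funB => //; exact: mg.
  + by move=> x _; rewrite subr_ge0; case/andP: (g01 x).
  + move=> x; rewrite /= in_itv/= => xL.
    by have := g_small x xL; lra.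
Qed.

Lemma rho_distortion_gt0 (M K p : R) :
  0 < M -> 0 < K -> 0 <= p -> M < p * K ->
  (forall x, M <= x -> g x = 1) -> (forall x, - K <= x <= 0 -> p <= g x) ->
  (0 < rho_distortion P delta Y)%E.
Proof.
move=> M0 K0 p0 MK g1 g_large; rewrite /g in g1 g_large.
rewrite /rho_distortion sube_gt0.
apply: (@le_lt_trans _ _ M%:E); last apply: (@lt_le_trans _ _ (p * K)%:E).
- have -> : M%:E = (M - 0)%:E by rewrite subr0.
  rewrite -(lebesgue_itv_length false true M0).
  apply: integral_le_measure => //.
  + by apply: measurable_funB => //; exact: mg.
  + by move=> x _; have := g01 x; rewrite /g; lra.
  + move=> x; rewrite /= !in_itv/= andbT => x0 xM; rewrite g1 ?subrr//.
    by rewrite leNgt; apply/negP => Mx; apply: xM; rewrite x0 Mx.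
- by rewrite lte_fin.
- have -> : (p * K)%:E = (p%:E * (0 - - K)%:E)%E by rewrite sub0r opprK.
  rewrite -(@lebesgue_itv_length _ (- K) 0 true false) ?oppr_lt0//.
  apply: integral_ge_measure => //.
  + by move=> x; rewrite /= !in_itv/= => /andP[].
  + exact: mg.
  + by move=> x _; case/andP: (g01 x).
Qed.

End DistortionRiskSign.

Section Bounded.
Context {d : measure_display} {T : measurableType d} {R : realType}.
Variable P : probability T R.
Implicit Types (X Z : T -> R).

Lemma Linf_bound X : Linf P X ->
  exists M, 0 < M /\ P.-negligible [set w | M < `|X w|].
Proof.
case=> _ [M XM]; exists (`|M| + 1); split; first by rewrite ltr_wpDl.
apply: negligibleS XM => w /= Mw XwM; move: Mw; apply/negP; rewrite -leNgt.
by rewrite (le_trans XwM)// (le_trans (ler_norm M))// lerDl.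
Qed.

Lemma negligible_lt0 Z : {ae P, forall w, 0 <= Z w} ->
  P.-negligible [set w | Z w < 0].
Proof. by apply: negligibleS => w /= Zw0 Zw; move: Zw0; rewrite ltNge Zw. Qed.

Lemma measurable_fun_add_scale X Z c : measurable_fun setT X ->
  measurable_fun setT Z -> measurable_fun setT (fun w => X w + c * Z w).
Proof.
by move=> mX mZ; apply: measurable_funD => //; exact: measurable_funM.
Qed.

Lemma Linf_add_scale X Z c : Linf P X -> Linf P Z ->
  Linf P (fun w => X w + c * Z w).
Proof.
move=> LX LZ; split; first exact: measurable_fun_add_scale LX.1 LZ.1.
have [MX [_ XMX]] := Linf_bound LX; have [MZ [_ ZMZ]] := Linf_bound LZ.
exists (MX + `|c| * MZ); apply: negligibleS (negligibleU XMX ZMZ) => w /= hw.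
have [XwMX|] := leP `|X w| MX; last by left.
have [ZwMZ|] := leP `|Z w| MZ; last by right.
exfalso; apply: hw; rewrite (le_trans (ler_normD _ _))// lerD// normrM.
by rewrite ler_wpM2l.
Qed.

Lemma Linf_cst c : Linf P (fun=> c).
Proof.
split; first exact: measurable_cst.
by exists `|c|; apply: negligibleS (negligible_set0 P) => w /=; apply.
Qed.

(* otherwise [{Z > 0}] is the countable union of the null sets
   [{Z >= 1 / (n + 1)}] *)
Lemma exists_pr_ge_gt0 Z : measurable_fun setT Z ->
  {ae P, forall w, 0 <= Z w} -> ~ {ae P, forall w, Z w = 0} ->
  exists e, 0 < e /\ 0 < pr P [set w | e <= Z w].
Proof.
move=> mZ Z0 Zn0; apply: contrapT => noe; apply: Zn0.
have null_ge (n : nat) : P.-negligible [set w | n.+1%:R^-1 <= Z w].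
  have mZn := measurable_superlevel n.+1%:R^-1 mZ.
  exists [set w | n.+1%:R^-1 <= Z w]; split => //.
  rewrite -(fineK (fin_num_measure P _ mZn)); congr EFin; apply/eqP.
  rewrite eq_le pr_ge0 andbT leNgt; apply/negP => pos.
  by apply: noe; exists n.+1%:R^-1; rewrite invr_gt0.
have := negligibleU (negligible_lt0 Z0) (negligible_bigcup null_ge).
apply: negligibleS.
move=> w /= Zw; have [Zw0|Zw0] := ltP (Z w) 0; first by left.
right; exists (Num.truncn (Z w)^-1) => //=.
have Zw_gt0 : 0 < Z w by rewrite lt_neqAle Zw0 andbT eq_sym; apply/eqP.
by apply: ltW; rewrite invf_plt ?posrE//; exact: truncnS_gt.
Qed.

End Bounded.

Section Positions.
Context {d : measure_display} {T : measurableType d} {R : realType}.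
Variable P : probability T R.
Variable delta : R -> R.
Hypothesis delta_distortion : distortion_fun delta.
Variable ST : T -> R.
Hypothesis mST : measurable_fun setT ST.
Hypothesis ST_ge0 : {ae P, forall w, 0 <= ST w}.
Hypothesis LST : Linf P ST.

Let acceptable c X := acc_distortion P delta (fun w => X w + c * ST w).

Lemma acceptable_long_position X x0 : Linf P X ->
  0 < x0 -> delta (distr_fun P ST x0) < 1 -> exists c, acceptable c X.
Proof.
move=> LX x0_gt0 dx0_lt1; have [M [M0 XM]] := Linf_bound LX.
set eta := 1 - delta (distr_fun P ST x0).
have eta0 : 0 < eta by rewrite subr_gt0.
set L := M / eta; have L0 : 0 < L by rewrite divr_gt0.
set c := (M + L) / x0; have c0 : 0 < c by rewrite divr_gt0 ?addr_gt0.
have cx0 : c * x0 = M + L by rewrite divfK ?gt_eqF.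
have mY := measurable_fun_add_scale c LX.1 mST.
exists c; split; first exact: Linf_add_scale.
apply: (rho_distortion_le0 delta_distortion mY M0 L0 (ltW eta0)).
- by rewrite /L mulrC divfK ?gt_eqF.
- move=> x xM; rewrite [distr_fun _ _ _]pr_eq0; first by case: delta_distortion.
    exact: measurable_sublevel.
  apply: negligibleS (negligibleU XM (negligible_lt0 ST_ge0)) => w /= Yx.
  have [XwM|] := leP `|X w| M; last by left.
  have [|STw0] := ltP (ST w) 0; first by right.
  have cST : 0 <= c * ST w by rewrite mulr_ge0// ltW.
  by move: XwM; rewrite ler_norml => /andP[MXw XwM]; exfalso; lra.
- move=> x /andP[x_gt0 xL]; rewrite /eta opprB addrC subrK.
  apply: (distortion_le delta_distortion (distr_fun_ge0 _ _ _)); last first.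
    exact: distr_fun_le1.
  apply: le_pr; [exact: measurable_sublevel..|].
  apply: negligibleS XM => w /= [Yx STx0]; rewrite ltNge; apply/negP.
  rewrite ler_norml => /andP[MX XM'].
  have : c * x0 < c * ST w by rewrite ltr_pM2l// ltNge; apply/negP.
  clearbody c L; lra.
Qed.

Hypothesis ST_not0 : ~ {ae P, forall w, ST w = 0}.

Lemma acceptable_lbound X : Linf P X ->
  exists c0, forall c, acceptable c X -> c0 <= c.
Proof.
move=> LX; have [M [M0 XM]] := Linf_bound LX.
have [e [e0 pe]] := exists_pr_ge_gt0 mST ST_ge0 ST_not0.
set p := pr P [set w | e <= ST w] in pe.
set K := (M + 1) / p; have K0 : 0 < K by rewrite divr_gt0 ?addr_gt0.
have pK : p * K = M + 1 by rewrite mulrC divfK ?gt_eqF.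
set c0 := - (M + K) / e; have c0e : c0 * e = - (M + K) by rewrite divfK ?gt_eqF.
have c0_lt0 : c0 < 0 by rewrite pmulr_llt0 ?invr_gt0// oppr_lt0 addr_gt0.
exists c0 => c [_ rho_le0]; rewrite leNgt; apply/negP => cc0.
have c_lt0 : c < 0 := lt_trans cc0 c0_lt0.
have mY := measurable_fun_add_scale c LX.1 mST.
suff : (0 < rho_distortion P delta (fun w => (X w + c * ST w)%R))%E.
  by rewrite ltNge rho_le0.
apply: (rho_distortion_gt0 delta_distortion mY M0 K0 (ltW pe)).
- by rewrite pK ltrDl.
- move=> x Mx; rewrite [distr_fun _ _ _]pr_eq1; first by case: delta_distortion.
    exact: measurable_sublevel.
  apply: negligibleS (negligibleU XM (negligible_lt0 ST_ge0)) => w /= Yx.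
  have [XwM|] := leP `|X w| M; last by left.
  have [|STw0] := ltP (ST w) 0; first by right.
  have cST : c * ST w <= 0 by rewrite mulr_le0_ge0// ltW.
  by move: XwM; rewrite ler_norml => /andP[MXw XwM]; exfalso; lra.
- move=> x /andP[Kx x0].
  apply: le_trans (distortion_ge_id delta_distortion _); last first.
    by rewrite distr_fun_ge0 distr_fun_le1.
  apply: le_pr; [exact: measurable_superlevel|exact: measurable_sublevel|].
  apply: negligibleS XM => w /= [eST Yx]; rewrite ltNge; apply/negP.
  rewrite ler_norml => /andP[MX XM']; apply: Yx.
  have cST : c * ST w <= c * e by rewrite ler_wnM2l// ltW.
  have ce : c * e < c0 * e by rewrite ltr_pM2r.
  clearbody c0; lra.
Qed.

Lemma not_acceptable_neg_cst a c : a < 0 ->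
  (forall x, 0 < x -> delta (distr_fun P ST x) = 1) -> ~ acceptable c (fun=> a).
Proof.
move=> a_lt0 dF1 [_ rho_le0].
have mY := measurable_fun_add_scale c (measurable_cst a) mST.
have g1 x : a < x -> delta (distr_fun P (fun w => a + c * ST w) x) = 1.
  move=> ax; have [c_le0|c_gt0] := leP c 0.
    rewrite [distr_fun _ _ _]pr_eq1; first by case: delta_distortion.
      exact: measurable_sublevel.
    apply: negligibleS (negligible_lt0 ST_ge0) => w /= aST; rewrite ltNge.
    apply/negP => STw0; apply: aST.
    have : c * ST w <= 0 by rewrite mulr_le0_ge0.
    lra.
  have -> : distr_fun P (fun w => a + c * ST w) x =
            distr_fun P ST ((x - a) / c).
    rewrite /distr_fun /pr; congr (fine (P _)).
    by apply/seteqP; split => w /=; rewrite ler_pdivlMr// => ?; lra.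
  by apply: dF1; rewrite divr_gt0// subr_gt0.
have : (0 < rho_distortion P delta (fun w => (a + c * ST w)%R))%E.
  apply: (rho_distortion_gt0 delta_distortion mY (M := - a / 4) (K := - a / 2)).
  - lra.
  - lra.
  - exact: ler01.
  - lra.
  - by move=> x ax; apply: g1; lra.
  - by move=> x /andP[ax _]; rewrite g1//; lra.
by rewrite ltNge rho_le0.
Qed.

Lemma exists_distortion_distr_fun_lt1 a : a < 1 ->
  (forall x y, a <= x -> x < y -> y <= 1 -> delta x < delta y) ->
  exists x, 0 < x /\ delta (distr_fun P ST x) < 1.
Proof.
move=> a1 strict; have [e [e0 pe]] := exists_pr_ge_gt0 mST ST_ge0 ST_not0.
have me := measurable_superlevel e mST.
exists (e / 2); split; first by rewrite divr_gt0.
apply: (distortion_lt1 delta_distortion a1 strict).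
rewrite distr_fun_ge0 /=.
apply: (@le_lt_trans _ _ (pr P (~` [set w | e <= ST w]))).
  apply: le_pr; [exact: measurable_sublevel|exact: measurableC|].
  rewrite (_ : _ `\` _ = set0); first exact: negligible_set0.
  by apply/seteqP; split => w //= [STe]; apply => eST; lra.
by rewrite pr_setC// ltrBlDl ltrDr.
Qed.

End Positions.

Section RiskBS.
Context {d : measure_display} {T : measurableType d} {R : realType}.
Variables (B : set (T -> R)) (S0 : R) (ST X : T -> R).

Lemma rho_BS_fin_num : 0 < S0 ->
  (exists c, B (fun w => X w + c * ST w)) ->
  (exists c0, forall c, B (fun w => X w + c * ST w) -> c0 <= c) ->
  rho_BS B S0 ST X \is a fin_num.
Proof.
move=> S0_gt0 [c Bc] [c0 c0_lb].
have ub : (rho_BS B S0 ST X <= (c * S0)%:E)%E.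
  by apply: ereal_inf_lbound; exists (c * S0) => //; rewrite /= mulfK ?gt_eqF.
have lb : ((c0 * S0)%:E <= rho_BS B S0 ST X)%E.
  apply: le_ereal_inf_tmp => _ [m Bm <-]; rewrite lee_fin -ler_pdivlMr//.
  exact: c0_lb.
by move: ub lb; case: (rho_BS B S0 ST X).
Qed.

Lemma rho_BS_pinfty : (forall c, ~ B (fun w => X w + c * ST w)) ->
  rho_BS B S0 ST X = +oo%E.
Proof.
move=> noB; rewrite /rho_BS; set S := (Y in ereal_inf Y).
suff -> : S = set0 by rewrite ereal_inf0.
by apply/seteqP; split => // y [m Bm _]; exact: noB Bm.
Qed.

End RiskBS.

Theorem proposition8p1 (d : measure_display) (T : measurableType d) (R : realType)
  (P : probability T R) (delta : R -> R) (S0 : R) (ST : T -> R) :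
  nonatomic P -> distortion_fun delta ->
  traded_asset P S0 ST -> Linf P ST ->
  ((forall X, Linf P X ->
      rho_BS (acc_distortion P delta) S0 ST X \is a fin_num)
   <-> (exists x : R, 0 < x /\ delta (distr_fun P ST x) < 1))
  /\
  ((exists a : R, 0 <= a < 1 /\
      (forall x y, a <= x -> x < y -> y <= 1 -> delta x < delta y)) ->
   forall X, Linf P X -> rho_BS (acc_distortion P delta) S0 ST X \is a fin_num).
Proof.
move=> _ delta_distortion [S0_gt0 mST ST_ge0 ST_not0] LST.
have fin_of_lt1 : (exists x, 0 < x /\ delta (distr_fun P ST x) < 1) ->
    forall X, Linf P X -> rho_BS (acc_distortion P delta) S0 ST X \is a fin_num.
  move=> [x0 [x0_gt0 dx0_lt1]] X LX; apply: rho_BS_fin_num => //.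
  - exact: acceptable_long_position dx0_lt1.
  - exact: acceptable_lbound.
split; [split=> [fin|//] |].
- apply: contrapT => no_x.
  have dF1 x : 0 < x -> delta (distr_fun P ST x) = 1.
    move=> x_gt0; apply/eqP; rewrite eq_le.
    have /andP[_ ->] := distortion_distr_fun_01 P delta_distortion x mST.
    by rewrite /= leNgt; apply/negP => dx_lt1; apply: no_x; exists x.
  have := fin _ (Linf_cst P (-1)); rewrite rho_BS_pinfty// => c.
  exact: not_acceptable_neg_cst dF1.
- case=> a [/andP[_ a_lt1] strict]; apply: fin_of_lt1.
  exact: exists_distortion_distr_fun_lt1 strict.
Qed.
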